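(* For $\beta\in S^2$ and $\lambda\ge 0$ let $g_\beta^\lambda:S^2\to S^2$ be defined as below. Let $K,L\subset S^2$ be compact subsets such that $z\neq-\beta$ for all $(\beta,z)\in K\times L$, and let $\varepsilon>0$. Then there exists $\delta\in(0,1)$ such that \[|g_\beta^\lambda(z)-\beta|<\varepsilon\quad\text{for all }(\lambda,\beta,z)\in[0,\delta]\times K\times L.\]
   Context: $S^2$ is the unit sphere in $\mathbb R^3$ and $\langle\cdot,\cdot\rangle$ the Euclidean inner product. For $\beta\in S^2$ let $H_\beta=\{y\in\mathbb R^3:\langle y-\beta,\beta\rangle=0\}$ be the tangent plane at $\beta$, and let $\pi_\beta:H_\beta\cup\{\infty\}\to S^2$ be the stereographic projection $\pi_\beta(y)=\frac{4}{|\beta+y|^2}(\beta+y)-\beta$ for $y\in H_\beta$, $\pi_\beta(\infty)=-\beta$ (a homeomorphism). For $\lambda>0$ let $D_\beta^\lambda(y)=\beta+\lambda(y-\beta)$ on $H_\beta$, $D_\beta^\lambda(\infty)=\infty$, and set $g_\beta^\lambda=\pi_\beta^{-1}\circ D_\beta^\lambda\circ\pi_\beta$ (here $\pi_\beta^{-1}$ denotes the inverse of $\pi_\beta$, so $g_\beta^\lambda:S^2\to S^2$). For $\lambda=0$ set $g_\beta^0(z)=-\beta$ if $z=-\beta$ and $g_\beta^0(z)=\beta$ otherwise. *)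

From HB Require Import structures.
From mathcomp Require Import all_boot all_order all_algebra.
From mathcomp Require Import all_classical all_reals all_analysis.
Set Implicit Arguments. Unset Strict Implicit. Unset Printing Implicit Defensive.
Import Order.TTheory GRing.Theory Num.Theory.
Import numFieldNormedType.Exports.
Local Open Scope classical_set_scope.
Local Open Scope ring_scope.

Section Defs.
Variable R : realType.
Local Notation V := 'rV[R]_3.

Definition dot (u v : V) : R := \sum_(i < 3) u ord0 i * v ord0 i.
Definition enorm (u : V) : R := Num.sqrt (dot u u).

Definition S2 : set V := [set x | enorm x = 1].

Definition Hpl (b : V) : set V := [set y | dot (y - b) b = 0].

(* H_beta u {oo} is modelled as option V, with None = oo *)
Definition stereo (b : V) (p : option V) : V :=
  match p with
  | Some y => (4 / (enorm (b + y)) ^+ 2) *: (b + y) - b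
  | None => - b
  end.

Definition in_Hoo (b : V) (p : option V) : Prop :=
  match p with Some y => Hpl b y | None => True end.

Definition stereo_inv (b : V) (z : V) : option V :=
  xget None [set p | in_Hoo b p /\ stereo b p = z].

Definition dil (b : V) (lam : R) (p : option V) : option V :=
  match p with
  | Some y => Some (b + lam *: (y - b))
  | None => None
  end.

(* g_beta^lambda; for lambda = 0 the special definition of the paper *)
Definition gmap (b : V) (lam : R) (z : V) : V :=
  if lam == 0 then (if z == - b then - b else b)
  else stereo b (dil b lam (stereo_inv b z)).

End Defs.

From HB Require Import structures.
From mathcomp Require Import all_boot all_order all_algebra.
From mathcomp Require Import all_classical all_reals all_analysis.
From mathcomp Require Import ring lra.
Import Order.TTheory GRing.Theory Num.Theory.
Import numFieldNormedType.Exports.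
Local Open Scope classical_set_scope.
Local Open Scope ring_scope.

(* For unit vectors b and z with z <> -b, the inverse stereographic image of z
   is b + t with t orthogonal to b and 1 + <z, b> = 8 / (4 + |t|^2).  The
   dilation replaces t by lam t, hence
     |g_b^lam(z) - b|^2 = 4 lam^2 |t|^2 / (4 + lam^2 |t|^2) <= 8 lam^2 / (1 + <z, b>).
   The function 1 + <z, b> = |z + b|^2 / 2 is continuous and positive on the
   compact set K x L, so it is bounded below by some m > 0, and
   delta = min(1/2, eps^2 m / 16) works. *)

Set Implicit Arguments.
Unset Strict Implicit.

Section EuclideanR3.
Variable R : realType.
Local Notation V := 'rV[R]_3.

Ltac dot_coords := rewrite /dot !big_ord_recr !big_ord0 /= ?mxE; ring.

Lemma dotC (u v : V) : dot u v = dot v u.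
Proof. by dot_coords. Qed.

Lemma dotDl (u w v : V) : dot (u + w) v = dot u v + dot w v.
Proof. by dot_coords. Qed.

Lemma dotDr (u v w : V) : dot u (v + w) = dot u v + dot u w.
Proof. by dot_coords. Qed.

Lemma dotZl (a : R) (u v : V) : dot (a *: u) v = a * dot u v.
Proof. by dot_coords. Qed.

Lemma dotZr (a : R) (u v : V) : dot u (a *: v) = a * dot u v.
Proof. by dot_coords. Qed.

Lemma dotNl (u v : V) : dot (- u) v = - dot u v.
Proof. by dot_coords. Qed.

Lemma dotNr (u v : V) : dot u (- v) = - dot u v.
Proof. by dot_coords. Qed.

Lemma dot_ge0 (u : V) : 0 <= dot u u.
Proof. by apply: sumr_ge0 => i _; rewrite -expr2 sqr_ge0. Qed.

Lemma dot_eq0 (u : V) : (dot u u == 0) = (u == 0).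
Proof.
apply/eqP/eqP => [u0|->]; last by rewrite /dot big1 // => i _; rewrite mxE mulr0.
apply/matrixP => i j; rewrite (ord1 i) mxE.
have /(_ j isT) /eqP := psumr_eq0P (fun i _ => sqr_ge0 (u ord0 i)) u0.
by rewrite mulf_eq0 orbb => /eqP.
Qed.

Lemma dot_gt0 (u : V) : u != 0 -> 0 < dot u u.
Proof. by rewrite lt_def dot_eq0 dot_ge0 andbT. Qed.

Lemma enorm_sqr (u : V) : enorm u ^+ 2 = dot u u.
Proof. by rewrite sqr_sqrtr // dot_ge0. Qed.

Lemma dot_S2 (u : V) : S2 u -> dot u u = 1.
Proof. by rewrite /S2 /= -enorm_sqr => ->; rewrite expr1n. Qed.

Lemma enorm_lt (u : V) (e : R) : 0 < e -> dot u u < e ^+ 2 -> enorm u < e.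
Proof. by move=> e0; rewrite -enorm_sqr ltr_pXn2r ?nnegrE ?sqrtr_ge0 ?ltW. Qed.

Lemma continuous_dot : continuous (fun p : V * V => dot p.1 p.2).
Proof.
move=> p; rewrite /dot; under eq_fun do rewrite !big_ord_recr !big_ord0 /= add0r.
have c1 i : continuous (fun q : V * V => q.1 ord0 i).
  by move=> q; exact: (continuous_comp cvg_fst (@coord_continuous R 1 3 ord0 i q.1)).
have c2 i : continuous (fun q : V * V => q.2 ord0 i).
  by move=> q; exact: (continuous_comp cvg_snd (@coord_continuous R 1 3 ord0 i q.2)).
by apply: cvgD; first apply: cvgD; apply: cvgM; by [apply: c1 | apply: c2].
Qed.

Lemma dot_add_unit (b z : V) : dot b b = 1 -> dot z z = 1 ->
  dot (z + b) (z + b) = 2 * (1 + dot z b).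
Proof. by move=> hb hz; rewrite dotDl !dotDr hb hz (dotC b); ring. Qed.

Lemma compact_unit_dot_bounded_below (K L : set V) :
  K `<=` @S2 R -> L `<=` @S2 R -> compact K -> compact L ->
  (forall b z, K b -> L z -> z <> - b) ->
  exists2 m : R, 0 < m & forall b z, K b -> L z -> m <= 1 + dot z b.
Proof.
move=> KS LS cK cL KLn.
pose f (p : V * V) := 1 + dot p.1 p.2.
have f_gt0 p : (L `*` K) p -> 0 < f p.
  case: p => z b [/= Lz Kb]; rewrite -(@ltr_pM2l _ 2) // mulr0.
  rewrite -(dot_add_unit (dot_S2 (KS b Kb)) (dot_S2 (LS z Lz))) dot_gt0 // addr_eq0.
  by apply/eqP; exact: KLn.
have [LK_empty|/set0P LK0] := eqVneq (L `*` K) set0.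
  by exists 1 => // b z Kb Lz; have : (L `*` K) (z, b) by []; rewrite LK_empty.
have f_cont : {within L `*` K, continuous f}.
  by apply: continuous_subspaceT => p; apply: cvgD; [exact: cvg_cst | exact: continuous_dot].
have [[z0 b0] /set_mem LKz0b0 f_min] := compact_EVT_min LK0 (compact_setX cL cK) f_cont.
exists (f (z0, b0)); first exact: f_gt0.
by move=> b z Kb Lz; apply: (f_min (z, b)); apply/mem_set.
Qed.

End EuclideanR3.

Section Stereographic.
Variables (R : realType) (b : 'rV[R]_3).
Hypothesis b_unit : dot b b = 1.

Lemma stereo_tangent (t : 'rV[R]_3) : dot t b = 0 ->
  stereo b (Some (b + t)) =
  (8 / (4 + dot t t) - 1) *: b + (4 / (4 + dot t t)) *: t.
Proof.
move=> tb; have s4 : 4 + dot t t != 0 by rewrite gt_eqF // ltr_wpDr ?dot_ge0.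
rewrite /stereo (_ : b + (b + t) = 2 *: b + t); last by rewrite addrA scaler_nat mulr2n.
rewrite enorm_sqr dotDl !dotDr !dotZl !dotZr b_unit tb dotC tb.
by apply/rowP => i; rewrite !mxE; field.
Qed.

Lemma dot_stereo_tangent (t : 'rV[R]_3) : dot t b = 0 ->
  dot (stereo b (Some (b + t))) b = 8 / (4 + dot t t) - 1.
Proof. by move=> tb; rewrite stereo_tangent // dotDl !dotZl b_unit tb; ring. Qed.

Lemma sqdist_stereo_tangent (t : 'rV[R]_3) : dot t b = 0 ->
  dot (stereo b (Some (b + t)) - b) (stereo b (Some (b + t)) - b) =
  4 * dot t t / (4 + dot t t).
Proof.
move=> tb; have s4 : 4 + dot t t != 0 by rewrite gt_eqF // ltr_wpDr ?dot_ge0.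
rewrite stereo_tangent // addrAC -[X in _ - X]scale1r -scalerBl.
rewrite dotDl !dotDr !dotZl !dotZr b_unit tb dotC tb.
by field.
Qed.

Lemma stereo_tangent_onto (z : 'rV[R]_3) : dot z z = 1 -> 0 < 1 + dot z b ->
  exists t, dot t b = 0 /\ stereo b (Some (b + t)) = z.
Proof.
move=> z_unit zb_gt0; set c := dot z b in zb_gt0.
have c1 : 1 + c != 0 by rewrite gt_eqF.
pose t := (2 / (1 + c)) *: (z - c *: b).
have tb : dot t b = 0.
  by rewrite /t dotZl dotDl dotNl dotZl b_unit mulr1 subrr mulr0.
have tt : 4 + dot t t = 8 / (1 + c).
  rewrite /t dotZl dotZr dotDl !dotDr !dotNl !dotNr !dotZl !dotZr.
  by rewrite z_unit b_unit (dotC b z) -/c; field.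
exists t; split => //; rewrite stereo_tangent // tt.
by apply/rowP => i; rewrite !mxE; field.
Qed.

Lemma stereo_invP (z : 'rV[R]_3) : dot z z = 1 -> 0 < 1 + dot z b ->
  exists t, [/\ dot t b = 0, stereo_inv b z = Some (b + t)
              & stereo b (Some (b + t)) = z].
Proof.
move=> z_unit zb_gt0.
have [t0 [t0b St0]] := stereo_tangent_onto z_unit zb_gt0.
have inH : in_Hoo b (Some (b + t0)) by rewrite /= /Hpl /= addrAC subrr add0r.
rewrite /stereo_inv.
have := xgetPex None (ex_intro _ _ (conj inH St0) : exists p, in_Hoo b p /\ stereo b p = z).
case: xget => [y|] [/= yH Sy]; first by exists (y - b); rewrite subrKC.
by move: zb_gt0; rewrite -Sy dotNl b_unit subrr ltxx.
Qed.

End Stereographic.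

Lemma gmap_sqdist_le (R : realType) (b z : 'rV[R]_3) (lam : R) :
  dot b b = 1 -> dot z z = 1 -> 0 < 1 + dot z b ->
  dot (gmap b lam z - b) (gmap b lam z - b) <= lam ^+ 2 * (8 / (1 + dot z b)).
Proof.
move=> b_unit z_unit zb_gt0; rewrite /gmap.
have [-> | lam0] := eqVneq lam 0.
  have zNb : z != - b.
    by apply: contraTneq zb_gt0 => ->; rewrite dotNl b_unit subrr ltxx.
  rewrite (negbTE zNb) subrr expr0n mul0r.
  by have /eqP -> : dot (0 : 'rV[R]_3) 0 == 0 by rewrite dot_eq0.
have [t [tb -> Sz]] := stereo_invP b_unit z_unit zb_gt0.
rewrite (_ : dil b lam _ = Some (b + lam *: t)); last by rewrite /= addrAC subrr add0r.
have lam_tb : dot (lam *: t) b = 0 by rewrite dotZl tb mulr0.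
rewrite sqdist_stereo_tangent // -Sz dot_stereo_tangent // dotZl dotZr.
have s_ge0 := dot_ge0 t; set s := dot t t in s_ge0 *.
have s4 : 0 < 4 + s by rewrite ltr_wpDr.
rewrite subrKC invf_div (mulrC 8) divfK ?pnatr_eq0 //.
rewrite [lam * (lam * s)]mulrA -expr2.
have qs_ge0 := mulr_ge0 (sqr_ge0 lam) s_ge0.
rewrite ler_pdivrMr ?ltr_wpDr //; nra.
Qed.

Unset Implicit Arguments.
Theorem lemma3p6 (R : realType) (K L : set 'rV[R]_3) (eps : R) :
  K `<=` @S2 R -> L `<=` @S2 R -> compact K -> compact L ->
  (forall b z, K b -> L z -> z <> - b) -> 0 < eps ->
  exists delta : R, 0 < delta < 1 /\
    forall (lam : R) (b z : 'rV[R]_3), 0 <= lam <= delta -> K b -> L z ->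
      enorm (gmap b lam z - b) < eps.
Proof.
move=> KS LS cK cL KLn eps_gt0.
have [m m_gt0 m_le] := compact_unit_dot_bounded_below KS LS cK cL KLn.
have eps2_gt0 : 0 < eps ^+ 2 by rewrite exprn_gt0.
exists (Num.min (1 / 2) (eps ^+ 2 * m / 16)); split.
  by rewrite lt_min gt_min !divr_gt0 ?mulr_gt0 //= ltr_pdivrMr // mul1r ltr1n.
move=> lam b z /andP[lam_ge0]; rewrite le_min => /andP[lam_half lam_small] Kb Lz.
have b_unit := dot_S2 (KS b Kb).
have z_unit := dot_S2 (LS z Lz).
have m_zb := m_le b z Kb Lz.
have zb_gt0 : 0 < 1 + dot z b by exact: lt_le_trans m_zb.
apply: enorm_lt => //; apply: le_lt_trans (gmap_sqdist_le lam b_unit z_unit zb_gt0) _.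
(* lam^2 * 8 / (1 + <z, b>) <= lam / 2 * 8 / m <= eps^2 / 4 *)
have w_le : 8 / (1 + dot z b) <= 8 / m by rewrite ler_pM2l // lef_pV2 ?posrE.
have lam_k : lam * (8 / m) <= eps ^+ 2 / 2.
  by rewrite mulrA ler_pdivrMr //; nra.
have := ler_wpM2l (sqr_ge0 lam) w_le.
have : 0 <= 8 / m by rewrite divr_ge0 // ltW.
nra.
Qed.
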